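(* Let $f:X\to\mathcal G$ be convex and $x_0\in\operatorname{dom} f$. If $x_0$ solves the set-valued Minty inequality, i.e. for all $x\in X$ with $f(x)\ne f(x_0)$ one has $f'(x,x_0-x)\not\subseteq 0^+f(x)$, then it solves the scalarized Minty inequality, i.e. for all $x\in X$ with $f(x)\neq f(x_0)$ there exists $z^*\in C^-\setminus\{0\}$ with $\varphi_{f,z^*}(x)\ne-\infty$ and $\varphi'_{f,z^*}(x,x_0-x)<0$. If additionally the strong regularity condition $\varphi_{f'(x,\cdot),z^*}(u)=\varphi'_{f,z^*}(x,u)$ holds for all $z^*\in C^-\setminus\{0\}$ and all $x,u\in X$, then $x_0$ solves the set-valued Minty inequality if and only if it solves the scalarized one.
   Context: $X$ real linear space, $Z$ real locally convex Hausdorff space with dual $Z^*$, $C\subseteq Z$ closed convex cone, $0\in C$, $C^-=\{z^*:z^*(c)\le0\ \forall c\in C\}$, $C^-\setminus\{0\}\ne\emptyset$. $\mathcal G=\{A\subseteq Z:A=\operatorname{cl}\operatorname{co}(A+C)\}$; $A\oplus B=\operatorname{cl}\{a+b\}$, $tA=\{ta\}$ ($t>0$), $A\ominus B=\{z:B+\{z\}\subseteq A\}$; $0^+A=\{z:A+\{z\}\subseteq A\}$ for $A\ne\emptyset$, $0^+\emptyset=\emptyset$. $f$ convex: $f(tx_1+(1-t)x_2)\supseteq tf(x_1)\oplus(1-t)f(x_2)$; $\operatorname{dom}f=\{x:f(x)\ne\emptyset\}$. $f'(x,u)=\bigcap_{t_0>0}\operatorname{cl}\operatorname{co}\bigcup_{0<t<t_0}\frac1t(f(x+tu)\ominus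 f(x))$. On $\overline{\mathbb R}$: inf-addition $\dot+$ ($(-\infty)\dot+(+\infty)=+\infty$), $r\ominus s=\inf\{t\in\mathbb R:r\le s\dot+t\}$ ($\inf\emptyset=+\infty$). $\varphi_{f,z^*}(x)=\inf\{-z^*(z):z\in f(x)\}$ ($+\infty$ if $f(x)=\emptyset$), $\varphi_{f'(x,\cdot),z^*}(u)=\inf\{-z^*(z):z\in f'(x,u)\}$, $\varphi'_{f,z^*}(x,u)=\inf_{t>0}\frac1t(\varphi_{f,z^*}(x+tu)\ominus\varphi_{f,z^*}(x))$. *)

From HB Require Import structures.
From mathcomp Require Import all_boot all_order all_algebra.
From mathcomp Require Import all_classical all_reals all_analysis.
Set Implicit Arguments. Unset Strict Implicit. Unset Printing Implicit Defensive.
Import Order.TTheory GRing.Theory Num.Theory.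
Local Open Scope classical_set_scope.
Local Open Scope ring_scope.

Section Defs.
Context {R : realType}.

Definition cvx {M : lmodType R} (A : set M) :=
  forall a b (t : R), A a -> A b -> 0 <= t <= 1 -> A (t *: a + (1 - t) *: b).

Definition co {M : lmodType R} (A : set M) : set M :=
  \bigcap_(B in [set B : set M | A `<=` B /\ cvx B]) B.

Definition msum {M : lmodType R} (A B : set M) : set M :=
  [set z | exists a b, A a /\ B b /\ z = a + b].

Definition sscale {M : lmodType R} (t : R) (A : set M) : set M :=
  [set t *: a | a in A].

Definition sminus {M : lmodType R} (A B : set M) : set M :=
  [set z | forall b, B b -> A (b + z)].

(* recession cone 0^+A ; empty for A empty *)
Definition rec_cone {M : lmodType R} (A : set M) : set M :=
  [set z | (exists a, A a) /\ forall a, A a -> A (a + z)].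

Section TVS.
Context {Z : tvsType R}.

Definition soplus (A B : set Z) : set Z := closure (msum A B).

Definition closed_convex_cone (C : set Z) :=
  closed C /\ cvx C /\ C 0 /\ (forall (t : R) c, 0 <= t -> C c -> C (t *: c)).

Definition inG (C : set Z) (A : set Z) := A = closure (co (msum A C)).

Definition in_dual (zs : Z -> R) :=
  (forall (s : R) (a b : Z), zs (s *: a + b) = s * zs a + zs b) /\ continuous (zs : Z -> R^o).

Definition in_Cminus0 (C : set Z) (zs : Z -> R) :=
  in_dual zs /\ (forall c, C c -> zs c <= 0) /\ (exists z, zs z != 0).

Definition sv_convex {X : lmodType R} (f : X -> set Z) :=
  forall x1 x2 (t : R), 0 < t < 1 ->
    soplus (sscale t (f x1)) (sscale (1 - t) (f x2)) `<=` f (t *: x1 + (1 - t) *: x2).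

Definition sv_deriv {X : lmodType R} (f : X -> set Z) (x u : X) : set Z :=
  \bigcap_(t0 in [set t0 : R | 0 < t0])
    closure (co (\bigcup_(t in [set t : R | 0 < t < t0])
      sscale t^-1 (sminus (f (x + t *: u)) (f x)))).

(* inf { - z^*(z) : z in A }  (= +oo when A is empty) *)
Definition phiS (zs : Z -> R) (A : set Z) : \bar R :=
  ereal_inf [set (- zs z)%:E | z in A].

End TVS.

Local Open Scope ereal_scope.

(* inf-addition: (-oo) + (+oo) = +oo *)
Definition infadd (r s : \bar R) : \bar R :=
  match r, s with
  | +oo, _ => +oo
  | _, +oo => +oo
  | -oo, _ => -oo
  | _, -oo => -oo
  | a%:E, b%:E => (a + b)%R%:E
  end.

Definition eminus (r s : \bar R) : \bar R :=
  ereal_inf [set t%:E | t in [set t : R | r <= infadd s t%:E]].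

Definition phi_deriv {X : lmodType R} (phi : X -> \bar R) (x u : X) : \bar R :=
  ereal_inf [set (t^-1)%:E * eminus (phi (x + t *: u)%R) (phi x)
            | t in [set t : R | (0 < t)%R]].

Local Close Scope ereal_scope.

Section Minty.
Context {X : lmodType R} {Z : tvsType R}.
Variables (C : set Z) (f : X -> set Z) (x0 : X).

Definition set_Minty :=
  forall x, f x <> f x0 -> ~ (sv_deriv f x (x0 - x) `<=` rec_cone (f x)).

Definition scal_Minty :=
  forall x, f x <> f x0 -> exists zs : Z -> R,
    in_Cminus0 C zs /\ phiS zs (f x) <> -oo%E /\
    (phi_deriv (fun y => phiS zs (f y)) x (x0 - x) < 0)%E.

Definition strong_regularity :=
  forall zs : Z -> R, in_Cminus0 C zs -> forall x u : X,
    phiS zs (sv_deriv f x u) = phi_deriv (fun y => phiS zs (f y)) x u.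

End Minty.
End Defs.

From Pilot Require Import Defs.
From HB Require Import structures.
From mathcomp Require Import all_boot all_order all_algebra.
From mathcomp Require Import all_classical all_reals all_analysis.
From mathcomp Require Import unstable ring lra.
Set Implicit Arguments. Unset Strict Implicit. Unset Printing Implicit Defensive.
Import Order.TTheory GRing.Theory Num.Theory.
Import numFieldTopology.Exports numFieldNormedType.Exports.
Local Open Scope classical_set_scope.
Local Open Scope ring_scope.

(* If f'(x, x0 - x) is not contained in 0^+ f(x), there are z in f'(x, x0 - x)
   and a in f(x) with a + z outside f(x) = cl co (f(x) + C).  A continuous linear
   functional z^* strictly separates a + z from co (f(x) + C); it is nonpositive
   on C, phi_{f,z^*}(x) is finite and z^*(z) > 0.  Were phi'_{f,z^*}(x, x0 - x)
   nonnegative, every difference quotient t^-1 (f(x + t (x0 - x)) (-) f(x)) would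
   lie in the closed half-space {z^* <= 0}, hence so would f'(x, x0 - x),
   contradicting z^*(z) > 0.  (If f(x) is empty, phi = +oo and phi' = -oo.)
   The separating functional comes from the analytic Hahn-Banach theorem, proved
   by Zorn's lemma on dominated linear graphs, applied to the Minkowski gauge of
   an open convex neighbourhood of 0.
   Conversely, under strong regularity phi'_{f,z^*}(x, x0 - x) < 0 yields some
   z in f'(x, x0 - x) with z^*(z) > 0, whereas z^* <= 0 on 0^+ f(x) as soon as
   phi_{f,z^*}(x) > -oo. *)

Section ConvexHull.
Context {R : realType} {M : lmodType R}.

Lemma co_sub (A B : set M) : A `<=` B -> cvx B -> co A `<=` B.
Proof. by move=> AB cB z hz; exact: (hz B). Qed.

Lemma sub_co (A : set M) : A `<=` co A.
Proof. by move=> z Az B [AB _]; exact: AB. Qed.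

Lemma cvx_co (A : set M) : cvx (co A).
Proof.
move=> a b t ha hb ht B [AB cB].
exact: (cB a b t (ha B (conj AB cB)) (hb B (conj AB cB)) ht).
Qed.

End ConvexHull.

Section LinearForm.
Context {R : realType} {V : lmodType R}.

Definition linear_form (F : V -> R) :=
  forall s a b, F (s *: a + b) = s * F a + F b.

Variables (F : V -> R) (hF : linear_form F).

Lemma linear_formD a b : F (a + b) = F a + F b.
Proof. by rewrite -[a in LHS]scale1r hF mul1r. Qed.

Lemma linear_form0 : F 0 = 0.
Proof. by have := linear_formD 0 0; rewrite addr0 => h; lra. Qed.

Lemma linear_formZ s a : F (s *: a) = s * F a.
Proof. by rewrite -[_ *: a]addr0 hF linear_form0 addr0. Qed.

Lemma linear_formN a : F (- a) = - F a.
Proof. by rewrite -scaleN1r linear_formZ mulN1r. Qed.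

Lemma linear_formB a b : F (a - b) = F a - F b.
Proof. by rewrite linear_formD linear_formN. Qed.

End LinearForm.

Section TVSTopology.
Context {R : realType} {Z : tvsType R}.

Lemma nbhs_scaler (x : Z) (s0 : R) (U : set Z) : nbhs (s0 *: x) U ->
  exists2 e : R, 0 < e & forall s : R, `|s0 - s| < e -> U (s *: x).
Proof.
move=> /(scale_continuous (s0, x)) /= [[B1 B2]] [/nbhs_ballP[e e0 he] B2x] BU.
exists e => // s hs; apply: (BU (s, x)); split => /=; first exact: he.
exact: nbhs_singleton.
Qed.

Lemma nbhs_open_convex (p : Z) (U : set Z) : nbhs p U ->
  exists b : set Z, [/\ open b, b p, b `<=` U & cvx b].
Proof.
move=> pU; have [B Bc [Bo Bb]] := @locally_convex R Z.
have [V [BV Vp] VU] := Bb p U pU.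
exists V; split => //; first exact: Bo.
move=> a c t aV cV /andP[t0 t1].
have := Bc V (mem_set BV) a c (Itv01 t0 t1) (mem_set aV) (mem_set cV).
by rewrite inE.
Qed.

Lemma linear_form_continuous (F : Z -> R) (N : set Z) : linear_form F ->
  nbhs 0 N -> (forall z, N z -> `|F z| < 1) -> continuous (F : Z -> R^o).
Proof.
move=> hF N0 Nb x; apply/cvgrPdist_lt => e e0.
have := nbhsT x (nbhs0Z (lt0r_neq0 e0) N0).
apply: filterS => _ [_ [n Nn <-] <-] /=.
rewrite (linear_formD hF) (linear_formZ hF) opprD addrA subrr sub0r normrN.
by rewrite normrM gtr0_norm // gtr_pMr // Nb.
Qed.

End TVSTopology.

Section MinkowskiGauge.
Context {R : realType} {Z : tvsType R}.
Variables (D : set Z) (hDc : cvx D) (hD0 : D 0)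
  (hDo : forall x, D x -> nbhs x D).

Definition gauge_set (x : Z) := [set t : R | 0 < t /\ D (t^-1 *: x)].
Definition gauge (x : Z) := inf (gauge_set x).

Lemma gauge_set_neq0 x : gauge_set x !=set0.
Proof.
have := hDo hD0; rewrite -(scale0r x) => /nbhs_scaler[e e0 he].
exists (2 / e); split; first by rewrite divr_gt0.
rewrite invf_div; apply: he; rewrite sub0r normrN ger0_norm ?divr_ge0 ?ltW//.
by rewrite ltr_pdivrMr// ltr_pMr// ltr1n.
Qed.

Lemma gauge_set_lbound x : has_lbound (gauge_set x).
Proof. by exists 0 => t [t0 _]; exact: ltW. Qed.

Lemma gauge_ge0 x : 0 <= gauge x.
Proof. by apply: lb_le_inf; [exact: gauge_set_neq0 | move=> t [t0 _]; exact: ltW]. Qed.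

Lemma gauge_le x t : gauge_set x t -> gauge x <= t.
Proof. by move=> h; apply: (ge_inf (gauge_set_lbound x)). Qed.

Lemma gauge_set_le x t t' : gauge_set x t -> t <= t' -> gauge_set x t'.
Proof.
move=> [t0 ht] tt'; have t'0 : 0 < t' by apply: lt_le_trans tt'.
split => //; have := @hDc _ _ (t / t') ht hD0.
rewrite scaler0 addr0 scalerA mulrAC mulfV ?gt_eqF// mul1r; apply.
by apply/andP; split; [rewrite divr_ge0 ?ltW | rewrite ler_pdivrMr// mul1r].
Qed.

Lemma gauge_lt x t : gauge x < t -> gauge_set x t.
Proof. by move=> /(inf_lt (gauge_set_neq0 x))[t' h t't]; exact: gauge_set_le h (ltW t't). Qed.

Lemma gaugeZ x s : 0 < s -> gauge (s *: x) = s * gauge x.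
Proof.
have gaugeZ_le (y : Z) (r : R) : 0 < r -> gauge (r *: y) <= r * gauge y.
  move=> r0; apply/ler_gtP => z hz.
  have [zr0 hzr] : gauge_set y (z / r) by apply: gauge_lt; rewrite ltr_pdivlMr// mulrC.
  rewrite -[z](mulfVK (lt0r_neq0 r0)) mulrC; apply: gauge_le.
  by split; [rewrite mulr_gt0 | rewrite invfM scalerA mulrAC mulVf ?gt_eqF// mul1r].
move=> s0; apply/eqP; rewrite eq_le gaugeZ_le//= -ler_pdivlMl//.
have := gaugeZ_le (s *: x) s^-1; rewrite invr_gt0 scalerA mulVf ?gt_eqF// scale1r.
by move=> /(_ s0); rewrite mulrC.
Qed.

Lemma gaugeD x y : gauge (x + y) <= gauge x + gauge y.
Proof.
apply/ler_gtP => z hz; pose e := z - (gauge x + gauge y).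
have e0 : 0 < e by rewrite subr_gt0.
have [t10 ht1] : gauge_set x (gauge x + e / 2) by apply: gauge_lt; rewrite ltrDl divr_gt0.
have [t20 ht2] : gauge_set y (gauge y + e / 2) by apply: gauge_lt; rewrite ltrDl divr_gt0.
set t1 := gauge x + e / 2 in t10 ht1 *; set t2 := gauge y + e / 2 in t20 ht2 *.
have -> : z = t1 + t2 by rewrite /t1 /t2 /e; field.
have t12 : 0 < t1 + t2 by rewrite addr_gt0.
apply: gauge_le; split => //.
have := @hDc _ _ (t1 / (t1 + t2)) ht1 ht2.
have -> : 1 - t1 / (t1 + t2) = t2 / (t1 + t2).
  by apply: (mulIf (lt0r_neq0 t12)); rewrite mulrBl !mulfVK ?gt_eqF// mul1r; ring.
have -> : t1 / (t1 + t2) *: (t1^-1 *: x) + t2 / (t1 + t2) *: (t2^-1 *: y) =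
   (t1 + t2)^-1 *: (x + y).
  rewrite !scalerA scalerDr; congr (_ *: _ + _ *: _); field.
    by rewrite !gt_eqF.
  by rewrite !gt_eqF.
by apply; apply/andP; split; [rewrite divr_ge0 ?ltW | rewrite ler_pdivrMr// mul1r lerDl ltW].
Qed.

Lemma gauge_lt1 x : D x -> gauge x < 1.
Proof.
move=> Dx; have := hDo Dx; rewrite -{1}(scale1r x) => /nbhs_scaler[e e0 he].
pose s := 1 + e / 2; have s0 : 0 < s by rewrite addr_gt0// divr_gt0.
apply: (@le_lt_trans _ _ s^-1); last by rewrite invf_lt1// /s ltrDl divr_gt0.
apply: gauge_le; split; first by rewrite invr_gt0.
rewrite invrK; apply: he; rewrite /s opprD addrA subrr sub0r normrN.
by rewrite ger0_norm ?divr_ge0 ?ltW// ltr_pdivrMr// ltr_pMr// ltr1n.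
Qed.

Lemma gauge_ge1 q : ~ D q -> 1 <= gauge q.
Proof. by move=> Dq; rewrite leNgt; apply/negP => /gauge_lt[_]; rewrite invr1 scale1r. Qed.

End MinkowskiGauge.

Section HahnBanach.
Context {R : realType} {V : lmodType R}.
Variables (p : V -> R) (p_ge0 : forall x, 0 <= p x)
  (pD : forall x y, p (x + y) <= p x + p y)
  (pZ : forall s x, 0 < s -> p (s *: x) = s * p x)
  (q : V) (pq_ge1 : 1 <= p q).

(* Graphs of linear forms on subspaces of V, dominated by p and taking the
   value 1 at q: the ordered set to which Zorn's lemma is applied. *)
Definition dominated_graph (G : set (V * R)) :=
  [/\ forall z r r', G (z, r) -> G (z, r') -> r = r',
      forall s z r z' r', G (z, r) -> G (z', r') -> G (s *: z + z', s * r + r'),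
      forall z r, G (z, r) -> r <= p z & G (q, 1)].

Lemma dominated_graph0 G : dominated_graph G -> G (0, 0).
Proof.
move=> [_ hc _ hq1]; have := hc (-1) _ _ _ _ hq1 hq1.
by rewrite scaleN1r addNr mulN1r addNr.
Qed.

Lemma dominated_graphZ G s z r : dominated_graph G -> G (z, r) -> G (s *: z, s * r).
Proof.
move=> hG h; have [_ hc _ _] := hG; have := hc s _ _ _ _ h (dominated_graph0 hG).
by rewrite !addr0.
Qed.

Lemma sublinear0 : p 0 = 0.
Proof. by have := pZ (0 : V) (ltr0Sn R 1); rewrite scaler0 => h; lra. Qed.

Lemma dominated_graph_line : dominated_graph [set zr | exists s, zr = (s *: q, s)].
Proof.
have q0 : q != 0 by apply/eqP => q0; move: pq_ge1; rewrite q0 sublinear0; lra.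
split.
- move=> z r r' [s [-> ->]] [s' [/eqP e ->]]; apply/eqP; rewrite -subr_eq0.
  by move: e; rewrite -subr_eq0 -scalerBl scaler_eq0 (negbTE q0) orbF.
- move=> s _ _ _ _ [s1 [-> ->]] [s2 [-> ->]]; exists (s * s1 + s2).
  by rewrite scalerDl scalerA.
- move=> _ _ [s [-> ->]].
  have [s0|s0] := ltP 0 s; last exact: le_trans s0 (p_ge0 _).
  by rewrite pZ// ler_peMr// ltW.
- by exists 1; rewrite scale1r.
Qed.

Section OneStepExtension.
Variables (G : set (V * R)) (hG : dominated_graph G) (y : V).

Lemma dominated_graph_gap : exists c : R,
  (forall z g, G (z, g) -> g - p (z - y) <= c) /\
  (forall z g, G (z, g) -> c <= p (z + y) - g).
Proof.
have [_ hc hd _] := hG.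
have gap z g z' g' : G (z, g) -> G (z', g') -> g - p (z - y) <= p (z' + y) - g'.
  move=> h1 h2; have := hd _ _ (hc 1 _ _ _ _ h1 h2); rewrite scale1r mul1r => h.
  by have := pD (z - y) (z' + y); rewrite [z' + y]addrC addrA subrK => h'; lra.
pose E := [set zg.2 - p (zg.1 - y) | zg in G].
have G00 := dominated_graph0 hG.
have Eub : ubound E (p (0 + y) - 0) by move=> _ [[z g] Gzg <-]; exact: gap.
exists (sup E); split => [z g h|z' g' h].
- by apply: (ub_le_sup (ex_intro _ _ Eub)); exists (z, g).
- by apply: ge_sup => [|_ [[z g] Gzg <-]]; [exists (0 - p (0 - y)), (0, 0) | exact: gap].
Qed.

Variables (hy : ~ (exists r, G (y, r))) (c : R)
  (hc1 : forall z g, G (z, g) -> g - p (z - y) <= c)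
  (hc2 : forall z g, G (z, g) -> c <= p (z + y) - g).

Definition graph_extension :=
  [set zr | exists z g t, G (z, g) /\ zr = (z + t *: y, g + t * c)].

Lemma graph_extension_functional z r r' :
  graph_extension (z, r) -> graph_extension (z, r') -> r = r'.
Proof.
have [hf hc _ _] := hG.
move=> [z1 [g1 [t [G1 [-> ->]]]]] [z2 [g2 [t' [G2 [/= e ->]]]]].
have [tt'|tt'] := eqVneq t t'.
  by move: e; rewrite -tt' => /addIr ez; rewrite ez in G1; rewrite (hf _ _ _ G1 G2).
exfalso; apply: hy.
have Gd := hc (-1) _ _ _ _ G1 G2; rewrite scaleN1r mulN1r in Gd.
have e2 : - z1 + z2 = (t - t') *: y.
  rewrite scalerBl; apply: (addrI z1); rewrite addrA subrr add0r.
  by rewrite addrA e -addrA subrr addr0.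
rewrite e2 in Gd; move/(dominated_graphZ (t - t')^-1 hG): Gd => Gd.
by rewrite scalerA mulVf ?scale1r ?subr_eq0// in Gd; eexists; exact: Gd.
Qed.

Lemma graph_extension_dominated z r : graph_extension (z, r) -> r <= p z.
Proof.
have [_ _ hd _] := hG.
move=> [z1 [g [t [Gzg [-> ->]]]]].
have [t0|t0|->] := ltgtP t 0; last by rewrite scale0r mul0r !addr0; exact: hd.
- have s0 : 0 < - t by rewrite oppr_gt0.
  have := ler_wpM2l (ltW s0) (hc1 (dominated_graphZ (- t)^-1 hG Gzg)).
  rewrite mulrBr mulrA mulfV ?gt_eqF// mul1r.
  have -> : z1 + t *: y = (- t) *: ((- t)^-1 *: z1 - y).
    by rewrite scalerBr scalerA mulfV ?gt_eqF// scale1r scaleNr opprK.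
  by rewrite pZ//; lra.
- have := ler_wpM2l (ltW t0) (hc2 (dominated_graphZ t^-1 hG Gzg)).
  rewrite mulrBr mulrA mulfV ?gt_eqF// mul1r.
  have -> : z1 + t *: y = t *: (t^-1 *: z1 + y).
    by rewrite scalerDr scalerA mulfV ?gt_eqF// scale1r.
  by rewrite pZ//; lra.
Qed.

Lemma dominated_graph_extension : dominated_graph graph_extension.
Proof.
have [_ hc _ hq1] := hG.
split.
- exact: graph_extension_functional.
- move=> s _ _ _ _ [z1 [g1 [t1 [G1 [-> ->]]]]] [z2 [g2 [t2 [G2 [-> ->]]]]].
  exists (s *: z1 + z2), (s * g1 + g2), (s * t1 + t2); split; first exact: hc.
  congr (_, _); last by ring.
  by rewrite scalerDr scalerA scalerDl addrACA.
- exact: graph_extension_dominated.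
- by exists q, 1, 0; split => //; rewrite scale0r mul0r !addr0.
Qed.

Lemma graph_extension_sub : G `<=` graph_extension.
Proof. by move=> [z g] h; exists z, g, 0; rewrite scale0r addr0 mul0r addr0. Qed.

Lemma graph_extension_y : graph_extension (y, c).
Proof.
by exists 0, 0, 1; split; [exact: dominated_graph0 | rewrite scale1r add0r mul1r add0r].
Qed.

End OneStepExtension.

Theorem hahn_banach : exists F : V -> R,
  [/\ linear_form F, F q = 1 & forall x, F x <= p x].
Proof.
pose T := {G : set (V * R) | dominated_graph G}.
pose sub_graph := fun A B : T => `[< sval A `<=` sval B >].
have [M Mmax] : exists M : T, premaximal sub_graph M.
  apply: (@ZL_preorder T (exist _ _ dominated_graph_line) sub_graph).
  - by move=> t; apply/asboolP.
  - by move=> a b c /asboolP ab /asboolP bc; apply/asboolP => x /ab /bc.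
  move=> A Atot; have [[G1 AG1]|An] := pselect (A !=set0); last first.
    by exists (exist _ _ dominated_graph_line) => s As; exfalso; apply: An; exists s.
  pose U := \bigcup_(G in A) sval G.
  have hU : dominated_graph U.
    split.
    - move=> z r r' [G2 A2 h2] [G3 A3 h3].
      have [/asboolP s23|/asboolP s32] := Atot _ _ A2 A3.
        by have [hf _ _ _] := svalP G3; exact: hf (s23 (z, r) h2) h3.
      by have [hf _ _ _] := svalP G2; exact: hf h2 (s32 (z, r') h3).
    - move=> s z r z' r' [G2 A2 h2] [G3 A3 h3].
      have [/asboolP s23|/asboolP s32] := Atot _ _ A2 A3.
        by exists G3 => //; have [_ hc _ _] := svalP G3; exact: hc (s23 (z, r) h2) h3.
      by exists G2 => //; have [_ hc _ _] := svalP G2; exact: hc h2 (s32 (z', r') h3).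
    - by move=> z r [G2 _ h]; have [_ _ hd _] := svalP G2; exact: hd.
    - by exists G1 => //; have [_ _ _ hq1] := svalP G1.
  by exists (exist _ U hU) => s As; apply/asboolP => x h; exists s.
have [hf hc hd hq1] := svalP M.
have total y : exists r, sval M (y, r).
  apply: contrapT => hy; have [c [hc1 hc2]] := dominated_graph_gap (svalP M) y.
  have hM' := dominated_graph_extension (svalP M) hy hc1 hc2.
  have MM' : sval M `<=` graph_extension (sval M) y c by exact: graph_extension_sub.
  have /asboolP := Mmax (exist _ _ hM') (asboolT MM').
  by move=> /(_ _ (graph_extension_y (svalP M) y c)) Myc; apply: hy; exists c.
pose F x := xget 0 [set r | sval M (x, r)].
have hF x : sval M (x, F x) := xgetPex 0 (total x).
exists F; split.
- by move=> s a b; apply: hf (hF _) _; exact: hc (hF a) (hF b).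
- exact: hf (hF q) hq1.
- by move=> x; exact: hd (hF x).
Qed.

End HahnBanach.

Section Separation.
Context {R : realType} {Z : tvsType R}.

Lemma in_dual_linear (F : Z -> R) : in_dual F -> linear_form F.
Proof. by case. Qed.

Lemma separate_open_convex_point (D : set Z) (q : Z) : cvx D -> D 0 ->
  (forall x, D x -> nbhs x D) -> ~ D q ->
  exists F : Z -> R, [/\ in_dual F, F q = 1 & forall x, D x -> F x < 1].
Proof.
move=> hDc hD0 hDo hq.
have [F [hl hFq hFp]] := hahn_banach (gauge_ge0 hD0 hDo) (gaugeD hDc hD0 hDo)
  (fun s x s0 => gaugeZ hDc hD0 hDo x s0) (gauge_ge1 hDc hD0 hDo hq).
have hlt x : D x -> F x < 1 by move=> Dx; exact: le_lt_trans (hFp x) (gauge_lt1 hDo Dx).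
exists F; split => //; split => //.
pose N := D `&` [set z | D (- z)].
apply: (@linear_form_continuous _ _ F N) => //.
  apply: filterI; first exact: hDo 0 hD0.
  by have := nbhs0N (hDo 0 hD0); apply: filterS => z [w Dw <-] /=; rewrite opprK.
move=> z [Dz Dnz]; rewrite ltr_norml hlt // andbT ltrNl -(linear_formN hl).
exact: hlt.
Qed.

Lemma separate_convex_open (K b : set Z) (k0 p : Z) :
  cvx K -> K k0 -> open b -> b p -> cvx b -> (forall k, K k -> ~ b k) ->
  exists F : Z -> R, in_dual F /\ forall k, K k -> F k < F p.
Proof.
move=> hK Kk0 bo bp hb Kb.
(* D = K - b + (p - k0) is an open convex neighbourhood of 0 missing p - k0. *)
pose D := [set d | exists k v, [/\ K k, b v & d = k - v + (p - k0)]].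
have hDc : cvx D.
  move=> _ _ t [k1 [v1 [K1 b1 ->]]] [k2 [v2 [K2 b2 ->]]] ht.
  exists (t *: k1 + (1 - t) *: k2), (t *: v1 + (1 - t) *: v2); split.
  - exact: hK.
  - exact: hb.
  rewrite !scalerDr !scalerN addrACA [X in _ + X = _](_ : _ = p - k0).
    by congr (_ + _); rewrite addrACA opprD.
  by rewrite -!scalerBr -scalerDl subrKC scale1r.
have hD0 : D 0 by exists k0, p; rewrite addrA subrK subrr.
have hDo x : D x -> nbhs x D.
  move=> [k [v [Kk bv ->]]].
  have nv : nbhs v b by apply: open_nbhs_nbhs.
  have := opp_continuous (- v) b; rewrite opprK => /(_ nv) nv'.
  have := nbhsB (k + (p - k0)) nv'; rewrite [k + _ + - v]addrAC.
  by apply: filterS => _ [w /= bw <-]; exists k, (- w); rewrite opprK addrAC.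
have hq : ~ D (p - k0).
  move=> [k [v [Kk bv /eqP]]]; rewrite -subr_eq subrr eq_sym subr_eq0 => /eqP kv.
  by apply: (Kb k Kk); rewrite kv.
have [F [hd hFq hF]] := separate_open_convex_point hDc hD0 hDo hq.
exists F; split => // k Kk.
have /hF : D (k - p + (p - k0)) by exists k, p.
rewrite addrA subrK !(linear_formB (in_dual_linear hd)).
by rewrite (linear_formB (in_dual_linear hd)) in hFq; lra.
Qed.

End Separation.

Section ExtendedReals.
Context {R : realType}.
Local Open Scope ereal_scope.

Lemma eminus_pinfty (r : \bar R) : eminus r +oo = -oo.
Proof.
rewrite /eminus (_ : [set t : R | r <= infadd +oo t%:E] = setT).
  exact: ereal_inf_real.
by apply/seteqP; split => // t _; rewrite /= leey.
Qed.

Lemma phi_deriv_pinfty {X : lmodType R} (phi : X -> \bar R) x u :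
  phi x = +oo -> phi_deriv phi x u = -oo.
Proof.
move=> phix; apply/eqP; rewrite -leeNy_eq; apply: ereal_inf_lbound.
by exists 1%R; [rewrite /= ltr01 | rewrite phix eminus_pinfty invr1 mul1e].
Qed.

End ExtendedReals.

Section Scalarization.
Context {R : realType} {Z : tvsType R}.
Implicit Types (A : set Z) (zs : Z -> R).

Lemma phiS_set0 zs : phiS zs set0 = +oo%E.
Proof. by rewrite /phiS image_set0 ereal_inf0. Qed.

Lemma phiS_le zs A a : A a -> (phiS zs A <= (- zs a)%:E)%E.
Proof. by move=> Aa; apply: ereal_inf_lbound; exists a. Qed.

Lemma phiS_fin_neq0 zs A r : phiS zs A = r%:E -> A !=set0.
Proof.
move=> phiA; apply/set0P/eqP => A0.
by move: phiA; rewrite A0 phiS_set0.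
Qed.

Lemma phiS_fin zs A a (M : R) : A a -> (forall w, A w -> zs w <= M) ->
  exists r, phiS zs A = r%:E.
Proof.
move=> Aa AM; have : ((- M)%:E <= phiS zs A)%E.
  by apply: le_ereal_inf_tmp => _ [w Aw <-]; rewrite lee_fin lerN2 AM.
move: (phiS_le zs Aa); case: (phiS zs A) => [r _ _| |] //; by exists r.
Qed.

Lemma rec_cone_nonpos zs A z : linear_form zs -> phiS zs A <> -oo%E ->
  rec_cone A z -> zs z <= 0.
Proof.
move=> hl phiA [[a Aa] hrec].
have Az n : A (a + n%:R *: z).
  elim: n => [|n IH]; first by rewrite scale0r addr0.
  by rewrite -addn1 natrD scalerDl scale1r addrA; exact: hrec.
have [r phr] : exists r, phiS zs A = r%:E.
  by move: phiA (phiS_le zs Aa); case: (phiS zs A) => [r _ _|_|] //; exists r.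
rewrite leNgt; apply/negP => z0.
pose n := Num.Def.archi_bound `|(- zs a - r) / zs z|.
have := phiS_le zs (Az n); rewrite phr lee_fin (linear_formD hl) (linear_formZ hl).
have : `|(- zs a - r) / zs z| < n%:R by apply: archi_boundP.
rewrite -(ltr_pM2r z0) => h1 h2.
have : - zs a - r <= `|(- zs a - r) / zs z| * zs z by rewrite -ler_pdivrMr // ler_norm.
by lra.
Qed.

Lemma halfspace_closed zs : in_dual zs -> closed [set w | zs w <= 0].
Proof.
by move=> [_ hc]; apply: (@preimage_closed Z R zs [set r : R | r <= 0]).
Qed.

Lemma halfspace_cvx zs : linear_form zs -> cvx [set w | zs w <= 0].
Proof.
move=> hl w1 w2 t /= h1 h2 /andP[t0 t1].
rewrite (linear_formD hl) !(linear_formZ hl).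
have : 0 <= 1 - t by lra.
by nra.
Qed.

Section DirectionalDerivative.
Context {X : lmodType R}.
Variables (f : X -> set Z) (zs : Z -> R) (hzs : in_dual zs) (x u : X) (r : R)
  (phix : phiS zs (f x) = r%:E)
  (phi'_ge0 : (0 <= phi_deriv (fun y => phiS zs (f y)) x u)%E).

Lemma diff_quotient_nonpos t s : 0 < t ->
  sminus (f (x + t *: u)) (f x) s -> zs s <= 0.
Proof.
move=> t0 hs; have hl := in_dual_linear hzs.
set Y := phiS zs (f (x + t *: u)).
have hb w : f x w -> (Y <= (- zs w - zs s)%:E)%E.
  by move=> fw; rewrite -opprD -(linear_formD hl); apply: phiS_le; exact: hs.
have hY : (Y <= (r - zs s)%:E)%E.
  move: hb; case: Y => [y| |] hb; last by rewrite leNye.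
    have : ((y + zs s)%:E <= phiS zs (f x))%E.
      by apply: le_ereal_inf_tmp => _ [w fw <-]; have := hb w fw; rewrite !lee_fin; lra.
    by rewrite phix !lee_fin; lra.
  by have [a fxa] := phiS_fin_neq0 phix; have := hb a fxa.
have hE : (eminus Y r%:E <= (- zs s)%:E)%E by apply: ereal_inf_lbound; exists (- zs s).
have hT : (phi_deriv (fun y => phiS zs (f y)) x u <= (t^-1)%:E * eminus Y r%:E)%E.
  by apply: ereal_inf_lbound; exists t => //=; rewrite phix.
have : (0 <= (t^-1)%:E * (- zs s)%:E)%E.
  apply: (le_trans phi'_ge0); apply: (le_trans hT); apply: lee_wpmul2l => //.
  by rewrite lee_fin invr_ge0 ltW.
by rewrite -EFinM lee_fin mulrN oppr_ge0 pmulr_rle0 // invr_gt0.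
Qed.

Lemma sv_deriv_sub_halfspace : sv_deriv f x u `<=` [set w | zs w <= 0].
Proof.
have hl := in_dual_linear hzs.
move=> w /(_ 1 ltr01).
rewrite closureEbigcap; apply; split; first exact: halfspace_closed.
apply: co_sub (halfspace_cvx hl) => _ [t /andP[t0 _] [s hs <-]].
by rewrite /= (linear_formZ hl) pmulr_rle0 ?invr_gt0 // (diff_quotient_nonpos t0 hs).
Qed.

End DirectionalDerivative.

Lemma Cminus_separation C A a y : closed_convex_cone C -> inG C A ->
  A a -> ~ A y -> exists zs, in_Cminus0 C zs /\ forall w, A w -> zs w < zs y.
Proof.
move=> [_ [_ [C0 Ccone]]] hA Aa Ay.
pose K := co (Defs.msum A C).
have AC_K w c : A w -> C c -> K (w + c) by move=> Aw Cc; apply: sub_co; exists w, c.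
have A_K w : A w -> K w by move=> Aw; rewrite -[w]addr0; exact: AC_K.
have [B nB KB] : exists2 B, nbhs y B & forall k, K k -> ~ B k.
  apply: contrapT => hn; apply: Ay; rewrite hA => B nB; apply: contrapT => hne.
  by apply: hn; exists B => // k Kk Bk; apply: hne; exists k.
have [b [bo bp bB bc]] := nbhs_open_convex nB.
have [zs [hd hzs]] := separate_convex_open (@cvx_co _ _ _) (A_K _ Aa) bo bp bc
  (fun k Kk bk => KB k Kk (bB k bk)).
have hl := in_dual_linear hd.
(* zs is bounded above on the cone a + C, hence nonpositive on C *)
have zsC c : C c -> zs c <= 0.
  move=> Cc; rewrite leNgt; apply/negP => c0.
  have t0 : 0 <= (zs y - zs a) / zs c by rewrite divr_ge0 ?ltW // subr_gt0 (hzs _ (A_K _ Aa)).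
  have := hzs _ (AC_K _ _ Aa (Ccone _ c t0 Cc)).
  by rewrite (linear_formD hl) (linear_formZ hl) mulfVK ?gt_eqF// subrKC ltxx.
exists zs; split => [|w Aw]; last exact: hzs (A_K _ Aw).
split; [exact: hd | split; [exact: zsC | exists (y - a)]].
by rewrite (linear_formB hl) subr_eq0 gt_eqF // (hzs _ (A_K _ Aa)).
Qed.

End Scalarization.

Section Minty.
Context {R : realType} {X : lmodType R} {Z : tvsType R}.
Variables (C : set Z) (f : X -> set Z) (x0 : X).

Lemma scal_Minty_of_set_Minty : closed_convex_cone C ->
  (exists zs : Z -> R, in_Cminus0 C zs) -> (forall x, inG C (f x)) ->
  set_Minty f x0 -> scal_Minty C f x0.
Proof.
move=> hC [zs0 hzs0] hfG hsm x hx; set u := x0 - x.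
have [fx0|/set0P[a fxa]] := eqVneq (f x) set0.
  exists zs0; rewrite fx0 phiS_set0; split => //; split => //.
  by rewrite phi_deriv_pinfty // fx0 phiS_set0.
have [z hz hnz] : exists2 z, sv_deriv f x u z & ~ rec_cone (f x) z.
  apply: contrapT => hn; apply: (hsm x hx) => z hz; apply: contrapT => hnz.
  by apply: hn; exists z.
have [a' fxa' fxa'z] : exists2 a', f x a' & ~ f x (a' + z).
  apply: contrapT => hn; apply: hnz; split; first by exists a.
  by move=> b fb; apply: contrapT => hb; apply: hn; exists b.
have [zs [hzs zs_lt]] := Cminus_separation hC (hfG x) fxa' fxa'z.
have hl := in_dual_linear hzs.1.
have zs_z : 0 < zs z by have := zs_lt _ fxa'; rewrite (linear_formD hl); lra.
have [r phix] := phiS_fin fxa (fun w fw => ltW (zs_lt w fw)).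
exists zs; split => //; split; first by rewrite phix.
rewrite ltNge; apply/negP => phi'_ge0.
have := sv_deriv_sub_halfspace hzs.1 phix phi'_ge0 hz.
by rewrite /= leNgt zs_z.
Qed.

Lemma set_Minty_of_scal_Minty :
  strong_regularity C f -> scal_Minty C f x0 -> set_Minty f x0.
Proof.
move=> hsr hsc x hx hsub; have [zs [hzs [phix phi'_lt0]]] := hsc x hx.
rewrite -(hsr zs hzs x (x0 - x)) in phi'_lt0.
have [_ [z hz <-]] := ereal_inf_lt phi'_lt0; rewrite lte_fin oppr_lt0 => zs_z.
have := rec_cone_nonpos (in_dual_linear hzs.1) phix (hsub z hz).
by rewrite leNgt zs_z.
Qed.

End Minty.

Theorem mainTheorem13 (R : realType) (X : lmodType R) (Z : tvsType R)
  (hZ : hausdorff_space Z)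
  (C : set Z) (hC : closed_convex_cone C)
  (hCm : exists zs : Z -> R, in_Cminus0 C zs)
  (f : X -> set Z) (hfG : forall x, inG C (f x)) (hfc : sv_convex f)
  (x0 : X) (hx0 : f x0 !=set0) :
  (set_Minty f x0 -> scal_Minty C f x0) /\
  (strong_regularity C f -> (set_Minty f x0 <-> scal_Minty C f x0)).
Proof.
have set_scal := scal_Minty_of_set_Minty (x0 := x0) hC hCm hfG.
split => // hsr; split => //.
exact: set_Minty_of_scal_Minty.
Qed.
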